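(* Let $\mathcal{A}$ be an irreducible $n\times n$ znz-pattern with digraph $D(\mathcal{A})$, and let $\mathbb{F}=\mathbb{Z}_2$. (a) If $D(\mathcal{A})$ has an odd number of loops, then $\mathcal{A}$ is not potentially nilpotent over $\mathbb{Z}_2$. (b) If $D(\mathcal{A})$ has exactly two loops and exactly two $2$-cycles, then $\mathcal{A}$ is not potentially nilpotent over $\mathbb{Z}_2$.
   Context: A znz-pattern is a square matrix with entries in $\{*,0\}$; a realization over $\mathbb{F}$ is a matrix over $\mathbb{F}$ with nonzero entries exactly at the $*$ positions; potentially nilpotent over $\mathbb{F}$ means some realization is nilpotent. $D(\mathcal{A})$ has vertex set $\{1,\ldots,n\}$ and an arc $(i,j)$ when $\mathcal{A}_{i,j}=*$; loops are arcs $(i,i)$, and a $2$-cycle is a pair of distinct vertices $i,j$ with both arcs $(i,j)$ and $(j,i)$. Irreducible means $D(\mathcal{A})$ is strongly connected. *)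

From HB Require Import structures.
From mathcomp Require Import all_boot all_order all_algebra.
Set Implicit Arguments. Unset Strict Implicit. Unset Printing Implicit Defensive.
Import GRing.Theory.
Local Open Scope ring_scope.

(* A znz-pattern of order n: entry true = '*', false = '0'. *)
Definition znz_pattern (n : nat) := 'M[bool]_n.

Definition realization (F : fieldType) (n : nat) (P : znz_pattern n) (A : 'M[F]_n) : Prop :=
  forall i j, (A i j != 0) = P i j.

Definition nilpotent_mx (F : fieldType) (n : nat) (A : 'M[F]_n) : Prop :=
  exists k : nat, A ^+ k = 0.

Definition potentially_nilpotent (F : fieldType) (n : nat) (P : znz_pattern n) : Prop :=
  exists A : 'M[F]_n, realization P A /\ nilpotent_mx A.

Definition arc (n : nat) (P : znz_pattern n) : rel 'I_n := fun i j => P i j.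

Definition irreducible_pattern (n : nat) (P : znz_pattern n) : Prop :=
  forall i j : 'I_n, connect (arc P) i j.

Definition num_loops (n : nat) (P : znz_pattern n) : nat :=
  #|[set i : 'I_n | P i i]|.

(* Number of 2-cycles: unordered pairs {i,j}, i <> j, with arcs (i,j),(j,i);
   counted via ordered pairs with i < j. *)
Definition num_2cycles (n : nat) (P : znz_pattern n) : nat :=
  #|[set ij : 'I_n * 'I_n | (ij.1 < ij.2)%N && P ij.1 ij.2 && P ij.2 ij.1]|.

From mathcomp Require Import all_boot all_order all_algebra.
Import GRing.Theory.
Local Open Scope ring_scope.
Set Implicit Arguments. Unset Strict Implicit. Unset Printing Implicit Defensive.

(* Over a commutative ring R of characteristic 2 the Frobenius map x |-> x^2 is
   additive, so (sum_x a_x)^2 = sum_x a_x^2 and, more generally, a double sum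
   of a symmetric family collapses to its diagonal.  Two matrix invariants are
   "squaring-compatible" in this sense:
   - the trace, tr (A A) = (tr A)^2;
   - the sum E2 of the principal 2x2 minors, E2 (A A) = (E2 A)^2, which follows
     from the Cauchy-Binet formula for 2x2 minors (the second compound matrix
     is multiplicative).
   A squaring-compatible f with f 0 = 0 vanishes on nilpotent matrices over a
   domain: A^k = 0 forces A^(2^k) = 0, hence (f A)^(2^k) = f (A^(2^k)) = 0.
   For a realization A of a pattern over Z_2 (entries exactly 0/1), tr A is the
   number of loops mod 2, and E2 A = C(#loops, 2) + #2-cycles mod 2 (signs do
   not matter in characteristic 2).  With an odd number of loops tr A = 1, and
   with two loops and two 2-cycles E2 A = 1 + 2 = 1; either way A is not
   nilpotent. *)

Lemma sum_square_split (T : finType) (f : T -> nat) (f_inj : injective f)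
    (V : nmodType) (F : T -> T -> V) :
  \sum_x \sum_y F x y =
  \sum_x F x x + \sum_x \sum_(y | (f x < f y)%N) (F x y + F y x).
Proof.
have row_split x : \sum_y F x y =
    F x x + (\sum_(y | (f x < f y)%N) F x y + \sum_(y | (f y < f x)%N) F x y).
  rewrite (bigD1 x) //= (bigID (fun y => (f x < f y)%N)) /=; congr (_ + (_ + _)).
    by apply: eq_bigl => y; case: eqP => // ->; rewrite ltnn.
  apply: eq_bigl => y; rewrite -leqNgt ltn_neqAle.
  by rewrite (inj_eq f_inj) eq_sym.
rewrite (eq_bigr _ (fun x _ => row_split x)) !big_split /=; congr (_ + _).
under [in RHS]eq_bigr => x _ do rewrite big_split.
rewrite big_split /=; congr (_ + _).
by rewrite (exchange_big_dep xpredT).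
Qed.

(* The number of pairs i < j inside a set S of indices is C(|S|, 2); proved by
   counting |S|^2 = |S| + 2 #pairs with [sum_square_split]. *)
Lemma card_lt_pairs n (S : {set 'I_n}) :
  #|[set x : 'I_n * 'I_n | (x.1 < x.2)%N && (x.1 \in S) && (x.2 \in S)]| = 'C(#|S|, 2).
Proof.
pose c (x : 'I_n) : nat := x \in S.
set m := #|S|; set k := #|_|.
have card_sum : (m = \sum_x c x)%N by rewrite /m -sum1_card big_mkcond.
have pairs_sum : (k = \sum_(x : 'I_n) \sum_(y : 'I_n | (x < y)%N) c x * c y)%N.
  rewrite /k -sum1_card pair_big_dep /= big_mkcond [RHS]big_mkcond /=.
  apply: eq_bigr => -[x y] _; rewrite inE /c /=.
  by case: (x < y)%N; case: (x \in S); case: (y \in S).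
have square : (m * m = m + k.*2)%N.
  rewrite [in (m * m)%N]card_sum big_distrl /=.
  under eq_bigr do rewrite big_distrr /=.
  rewrite (sum_square_split val_inj) -addnn pairs_sum; congr (_ + _).
    by rewrite card_sum; apply: eq_bigr => x _; rewrite /c; case: (x \in S).
  rewrite -big_split /=; apply: eq_bigr => x _; rewrite -big_split /=.
  by apply: eq_bigr => y _; rewrite [(c y * _)%N]mulnC.
rewrite bin2 -[k]doubleK; congr (_./2).
by rewrite -subn1 mulnBr muln1 square addKn.
Qed.

Section SecondCompound.
Variables (R : comPzRingType) (n : nat).

Definition minor2 (A : 'M[R]_n) (x y : 'I_n * 'I_n) : R :=
  A x.1 y.1 * A x.2 y.2 - A x.1 y.2 * A x.2 y.1.

(* The sum of the principal 2x2 minors (up to sign, the coefficient of X^(n-2)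
   in the characteristic polynomial). *)
Definition principal_minor2_sum (A : 'M[R]_n) : R :=
  \sum_(x : 'I_n * 'I_n | (x.1 < x.2)%N) minor2 A x x.

Lemma principal_minor2_sum0 : principal_minor2_sum 0 = 0.
Proof. by apply: big1 => x _; rewrite /minor2 !mxE mul0r subrr. Qed.

(* Cauchy-Binet for 2x2 minors: the second compound matrix is multiplicative. *)
Lemma minor2_mul (A B : 'M[R]_n) x z :
  minor2 (A *m B) x z =
  \sum_(y : 'I_n * 'I_n | (y.1 < y.2)%N) minor2 A x y * minor2 B y z.
Proof.
case: x z => [i j] [k l].
have expand : minor2 (A *m B) (i, j) (k, l) =
    \sum_p \sum_q minor2 A (i, j) (p, q) * (B p k * B q l).
  rewrite /minor2 /= !mxE [X in _ - X]mulrC !big_distrlr /= -sumrB.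
  apply: eq_bigr => p _.
  rewrite -sumrB; apply: eq_bigr => q _; rewrite mulrBl mulrACA; congr (_ - _).
  by rewrite mulrACA [A j p * _]mulrC.
rewrite expand (sum_square_split val_inj) big1 ?add0r => [|p _]; last first.
  by rewrite /minor2 subrr mul0r.
rewrite pair_big_dep /=; apply: eq_bigr => -[p q] /= _.
rewrite /minor2 /= -[A i q * _ - _]opprB mulNr -mulrN -mulrDr.
by rewrite [B q k * _]mulrC.
Qed.
End SecondCompound.

Section CharacteristicTwo.
Variable R : comNzRingType.
Hypothesis char2R : 2 \in [pchar R].

Lemma sum_symmetric (T : finType) (h : T -> T -> R) :
  (forall x y, h x y = h y x) -> \sum_x \sum_y h x y = \sum_x h x x.
Proof.
move=> h_sym; have rank_inj : injective (fun x : T => val (enum_rank x)).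
  by move=> x y /val_inj/enum_rank_inj.
rewrite (sum_square_split rank_inj) [X in _ + X]big1 ?addr0 // => x _.
by apply: big1 => y _; rewrite [h y x]h_sym (addrr_pchar2 char2R).
Qed.

Lemma sum_symmetric_in (T : finType) (P : pred T) (h : T -> T -> R) :
  (forall x y, h x y = h y x) ->
  \sum_(x | P x) \sum_(y | P y) h x y = \sum_(x | P x) h x x.
Proof.
move=> h_sym; pose hP x y := if P x && P y then h x y else 0.
have -> : \sum_(x | P x) \sum_(y | P y) h x y = \sum_x \sum_y hP x y.
  rewrite big_mkcond; apply: eq_bigr => x _; rewrite /hP.
  case: (P x) => /=; first by rewrite big_mkcond.
  by rewrite big1.
rewrite sum_symmetric => [|x y]; last by rewrite /hP andbC h_sym.
by rewrite [RHS]big_mkcond; apply: eq_bigr => x _; rewrite /hP andbb.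
Qed.

Lemma sum_square_diag (T : finType) (P : pred T) (g : T -> T -> R) :
  \sum_(x | P x) \sum_(y | P y) g x y * g y x = (\sum_(x | P x) g x x) ^+ 2.
Proof.
rewrite sum_symmetric_in => [|x y]; last by rewrite mulrC.
rewrite expr2 big_distrl /=.
under [RHS]eq_bigr => x _ do rewrite big_distrr /=.
by rewrite sum_symmetric_in // => x y; rewrite mulrC.
Qed.

Lemma trace_square (n : nat) (A : 'M[R]_n) : \tr (A *m A) = \tr A ^+ 2.
Proof.
rewrite /mxtrace; under eq_bigr => i _ do rewrite mxE.
exact: (sum_square_diag xpredT (fun i j => A i j)).
Qed.

Lemma principal_minor2_sum_square (n : nat) (A : 'M[R]_n) :
  principal_minor2_sum (A *m A) = principal_minor2_sum A ^+ 2.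
Proof.
rewrite /principal_minor2_sum; under eq_bigr => x _ do rewrite minor2_mul.
exact: sum_square_diag.
Qed.

Lemma sum_indicator (T : finType) (b : pred T) :
  \sum_x ((b x)%:R : R) = #|[set x | b x]|%:R.
Proof.
rewrite -sum1_card natr_sum [RHS]big_mkcond /=; apply: eq_bigr => x _.
by rewrite inE; case: (b x).
Qed.

(* For a 0/1 matrix with pattern P, tr A counts the loops of D(P) ... *)
Lemma trace_indicator (n : nat) (P : znz_pattern n) (A : 'M[R]_n) :
  (forall i j, A i j = (P i j)%:R) -> \tr A = (num_loops P)%:R.
Proof.
move=> A_P; rewrite /mxtrace.
by under eq_bigr => i _ do rewrite A_P; rewrite sum_indicator.
Qed.

(* ... and E2 A counts pairs of loops plus 2-cycles: the minor at {i, j} is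
   [i loop][j loop] - [i -> j][j -> i], and -1 = 1. *)
Lemma principal_minor2_sum_indicator (n : nat) (P : znz_pattern n) (A : 'M[R]_n) :
  (forall i j, A i j = (P i j)%:R) ->
  principal_minor2_sum A = ('C(num_loops P, 2) + num_2cycles P)%:R.
Proof.
move=> A_P; rewrite /num_loops -card_lt_pairs /num_2cycles natrD -!sum_indicator.
rewrite -big_split /principal_minor2_sum big_mkcond /=; apply: eq_bigr => -[i j] _ /=.
rewrite /minor2 !A_P /= (oppr_pchar2 char2R) -!natrM !inE.
by case: (i < j)%N; rewrite /= ?addr0 // !mulnb.
Qed.
End CharacteristicTwo.

Lemma squaring_invariant_nilpotent (R : idomainType) (n : nat)
    (f : 'M[R]_n -> R) (A : 'M[R]_n) (k : nat) :
  f 0 = 0 -> (forall B, f (B *m B) = f B ^+ 2) -> A ^+ k = 0 -> f A = 0.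
Proof.
move=> f0 f_sq Ak0.
have f_pow m : f (A ^+ (2 ^ m)) = f A ^+ (2 ^ m).
  elim: m => [|m IHm]; first by rewrite !expr1.
  by rewrite expnS mulnC !exprM -IHm expr2 -mulmxE f_sq.
have A_pow0 : A ^+ (2 ^ k) = 0.
  by rewrite -(subnKC (ltnW (ltn_expl k (isT : 1 < 2)%N))) exprD Ak0 mul0r.
by move: (f_pow k); rewrite A_pow0 f0 => /esym/eqP; rewrite expf_eq0 => /andP[_ /eqP].
Qed.

Lemma pchar_F2 : 2 \in [pchar 'F_2].
Proof. exact: pchar_Fp. Qed.

Lemma F2_natr (m : nat) : (m%:R : 'F_2) = (odd m)%:R.
Proof. by rewrite -Fp_nat_mod // modn2. Qed.

Lemma F2_realization (n : nat) (P : znz_pattern n) (A : 'M['F_2]_n) :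
  realization P A -> forall i j, A i j = (P i j)%:R.
Proof.
move=> realA i j; rewrite -realA.
by case: (A i j) => -[|[|//]] ?; apply/val_inj.
Qed.

Theorem lemma5p2 (n : nat) (P : znz_pattern n) :
  irreducible_pattern P ->
  (odd (num_loops P) -> ~ potentially_nilpotent 'F_2 P) /\
  (num_loops P = 2%N -> num_2cycles P = 2%N -> ~ potentially_nilpotent 'F_2 P).
Proof.
move=> _; split=> [odd_loops | two_loops two_cycles] [A [realA [k nilA]]];
  have A_P := F2_realization realA.
- have := squaring_invariant_nilpotent (mxtrace0 _ _) (@trace_square _ pchar_F2 n) nilA.
  by rewrite (trace_indicator A_P) F2_natr odd_loops => /eqP; rewrite oner_eq0.
- have := squaring_invariant_nilpotent (principal_minor2_sum0 _ _)
    (@principal_minor2_sum_square _ pchar_F2 n) nilA.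
  by rewrite (principal_minor2_sum_indicator pchar_F2 A_P) two_loops two_cycles.
Qed.
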